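(* Let $C$ be an $n\times n$ lower-triangular Toeplitz matrix whose diagonal entries satisfy $c_0\ge c_1\ge\cdots\ge c_{n-1}\ge0$ (entry $(i,j)$ equals $c_{i-j}$ for $i\ge j$). Let $k,b\ge1$ be integers with $(k-1)b\le n-1$. Then $$\mathrm{sens}_{k,b}(C)^2\le k\,\|C\|_{1\to2}^2+\frac{k}{b}\,\|C\|_{1\to1}^2 .$$
   Context: For an $n\times n$ matrix $C$ and integers $k,b\ge1$ with $(k-1)b\le n-1$, $\mathrm{sens}_{k,b}(C):=\bigl\|\sum_{j=0}^{k-1}C_{[\cdot,jb]}\bigr\|_2$, where $C_{[\cdot,m]}$ is the $m$-th column of $C$ with columns indexed from $0$; for $C$ as in the claim this equals $\sqrt{\sum_{i=0}^{n-1}\bigl[\sum_{j=0}^{\min(k-1,\lfloor i/b\rfloor)}c_{i-jb}\bigr]^2}$ and is the sensitivity under $b$-min-separated participation. For a matrix $M$, $\|M\|_{1\to1}$ is the maximum $\ell_1$ norm of a column of $M$ and $\|M\|_{1\to2}$ is the maximum $\ell_2$ norm of a column of $M$. *)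

From mathcomp Require Import all_boot all_order all_algebra.
Set Implicit Arguments. Unset Strict Implicit. Unset Printing Implicit Defensive.
Import Order.TTheory GRing.Theory Num.Theory.
Local Open Scope ring_scope.

Definition toeplitz_lt (R : pzRingType) (n : nat) (c : nat -> R) : 'M[R]_n :=
  \matrix_(i < n, j < n) (if (j <= i)%N then c (i - j)%N else 0).

Definition l2norm (R : rcfType) (n : nat) (v : 'cV[R]_n) : R :=
  Num.sqrt (\sum_(i < n) v i 0 ^+ 2).

Definition l1norm (R : rcfType) (n : nat) (v : 'cV[R]_n) : R :=
  \sum_(i < n) `|v i 0|.

Definition norm_1_2 (R : rcfType) (m n : nat) (M : 'M[R]_(m, n)) : R :=
  \big[Num.max/0]_(j < n) l2norm (col j M).

Definition norm_1_1 (R : rcfType) (m n : nat) (M : 'M[R]_(m, n)) : R :=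
  \big[Num.max/0]_(j < n) l1norm (col j M).

(* column with (nat) index m of M (columns indexed from 0); the zero column if m >= n
   (never used in that case under the hypothesis (k-1)b <= n-1). *)
Definition coln (R : pzRingType) (m n : nat) (M : 'M[R]_(m, n)) (p : nat) : 'cV[R]_m :=
  \col_i (if @insub _ (fun q => q < n)%N _ p is Some j then M i j else 0) .

Definition sens (R : rcfType) (n : nat) (k b : nat) (C : 'M[R]_n) : R :=
  l2norm (\sum_(j < k) coln C (j * b)%N).

From mathcomp Require Import all_boot all_order all_algebra.
From mathcomp Require Import zify ring lra.
Set Implicit Arguments. Unset Strict Implicit. Unset Printing Implicit Defensive.
Import Order.TTheory GRing.Theory Num.Theory.
Local Open Scope ring_scope.

(* Let d be the diagonal sequence of C extended by zeros; column s of C is d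
   delayed by s, so sens_{k,b}(C)^2 is the squared norm of the sum of the k
   delays of d by multiples of b.  Adding the delay by kb adds its squared norm,
   at most |d|_2^2 = |C|_{1->2}^2, and twice its inner product with the earlier
   delays.  As d is nonincreasing, b * sum_{j<k} d(i - jb) is at most the sum of
   d over the window (i - kb, i], so b times that inner product is at most
   sum_p d_p sum_{q>p} d_q <= (sum_p d_p)^2 / 2 = |C|_{1->1}^2 / 2.  Induction
   on k concludes. *)

Definition delay (R : nmodType) (d : nat -> R) (s i : nat) : R :=
  if (s <= i)%N then d (i - s)%N else 0.

Lemma sum_delay (R : nmodType) (g : nat -> R) (n s : nat) :
  \sum_(0 <= i < n) delay g s i = \sum_(0 <= i < n - s) g i.
Proof.
case: (leqP s n) => [le_sn | lt_ns]; last first.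
  rewrite [RHS]big_geq; last by lia.
  by rewrite big_nat big1 // => i /andP[_ lt_in]; rewrite /delay ifF //; lia.
rewrite (big_cat_nat (leq0n s) le_sn) /= big_nat big1 ?add0r; last first.
  by move=> i /andP[_ lt_is]; rewrite /delay ifF //; lia.
rewrite -{1}(add0n s) big_addn; apply: eq_bigr => i _.
by rewrite /delay leq_addl addnK.
Qed.

Lemma sum_delay_le (R : numDomainType) (g : nat -> R) (n s : nat) :
  (forall p, 0 <= g p) ->
  \sum_(0 <= i < n) delay g s i <= \sum_(0 <= i < n) g i.
Proof.
move=> g_ge0; rewrite sum_delay (big_cat_nat (leq0n (n - s)) (leq_subr s n)) /=.
by rewrite lerDl sumr_ge0.
Qed.

Lemma sum_mul_suffix_le_sqr (R : realDomainType) (d : nat -> R) (n : nat) :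
  (forall p, 0 <= d p) ->
  2 * \sum_(0 <= p < n) d p * \sum_(p.+1 <= q < n) d q
    <= (\sum_(0 <= p < n) d p) ^+ 2.
Proof.
move=> d_ge0; elim: n => [|n IH]; first by rewrite !big_geq // mulr0 expr2 mulr0.
rewrite big_nat_recr //= [\sum_(n.+1 <= q < n.+1) d q]big_geq // mulr0 addr0.
rewrite [X in _ <= X ^+ 2]big_nat_recr //=.
have -> : \sum_(0 <= p < n) d p * \sum_(p.+1 <= q < n.+1) d q
        = \sum_(0 <= p < n) d p * \sum_(p.+1 <= q < n) d q
          + (\sum_(0 <= p < n) d p) * d n.
  rewrite mulr_suml -big_split /=; apply: eq_big_nat => p /andP[_ lt_pn].
  by rewrite big_nat_recr //= mulrDr.
have := d_ge0 n; have := sumr_ge0 (index_iota 0 n) (fun p _ => d_ge0 p).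
nra.
Qed.

Lemma sum_sampled_le (R : numDomainType) (g : nat -> R) (b K : nat) :
  {homo g : x y / (x <= y)%N >-> x <= y} ->
  b%:R * \sum_(0 <= j < K) g (j * b)%N <= \sum_(0 <= q < K * b) g q.
Proof.
move=> g_homo; elim: K => [|K IH]; first by rewrite !big_geq // mulr0.
rewrite big_nat_recr //= mulrDr mulSn addnC.
rewrite (big_cat_nat (leq0n (K * b)) (leq_addr b _)) /=.
apply: lerD IH _.
apply: (@le_trans _ _ (\sum_(K * b <= q < K * b + b) g (K * b)%N)).
  by rewrite sumr_const_nat addKn mulr_natl.
by apply: ler_sum_nat => q /andP[le_Kbq _]; apply: g_homo.
Qed.

Lemma sum_rev_window (R : nmodType) (d : nat -> R) (N i : nat) :
  (N <= i.+1)%N ->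
  \sum_(0 <= q < N) d (i - q)%N = \sum_(i.+1 - N <= r < i.+1) d r.
Proof.
move=> le_Ni; rewrite big_nat_rev /= add0n.
set m := (i.+1 - N)%N; have -> : i.+1 = (N + m)%N by lia.
rewrite -{1}(add0n m) big_addn addnK.
by apply: eq_big_nat => q /andP[_ lt_qN]; congr d; rewrite /m; lia.
Qed.

Lemma delay_cross_le (R : numDomainType) (d : nat -> R) (n b k : nat) :
  (forall p, 0 <= d p) -> (forall x y, (x <= y)%N -> d y <= d x) ->
  b%:R * \sum_(0 <= i < n) delay d (k * b) i * \sum_(0 <= j < k) delay d (j * b) i
    <= \sum_(0 <= p < n) d p * \sum_(p.+1 <= q < n) d q.
Proof.
move=> d_ge0 d_noninc.
set tail := fun p => \sum_(p.+1 <= q < n) d q.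
have tail_ge0 p : 0 <= d p * tail p by rewrite mulr_ge0 // sumr_ge0.
apply: le_trans (sum_delay_le n (k * b) tail_ge0).
rewrite mulr_sumr; apply: ler_sum_nat => i /andP[_ lt_in].
rewrite /delay; case: ifP => le_kbi; last by rewrite mul0r mulr0.
rewrite mulrCA ler_wpM2l //.
have -> : \sum_(0 <= j < k) (if (j * b <= i)%N then d (i - j * b)%N else 0)
        = \sum_(0 <= j < k) d (i - j * b)%N.
  by apply: eq_big_nat => j /andP[_ lt_jk]; rewrite ifT //; nia.
apply: le_trans (sum_sampled_le (g := fun q => d (i - q)%N) b k _) _.
  by move=> x y le_xy; apply: d_noninc; apply: leq_sub2l.
rewrite sum_rev_window; last by lia.
have -> : (i.+1 - k * b = (i - k * b).+1)%N by lia.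
rewrite /tail (big_cat_nat _ (lt_in : (i.+1 <= n)%N)) /=; last by lia.
by rewrite lerDl sumr_ge0.
Qed.

Lemma sum_sqr_sum_delay_le (R : realFieldType) (d : nat -> R) (n b k : nat) :
  (0 < b)%N -> (forall p, 0 <= d p) -> (forall x y, (x <= y)%N -> d y <= d x) ->
  \sum_(0 <= i < n) (\sum_(0 <= j < k) delay d (j * b) i) ^+ 2
    <= k%:R * \sum_(0 <= i < n) d i ^+ 2
       + k%:R / b%:R * (\sum_(0 <= p < n) d p) ^+ 2.
Proof.
move=> b_gt0 d_ge0 d_noninc; elim: k => [|k IH].
  by rewrite !mul0r addr0 big_nat big1 // => i _; rewrite big_geq // expr2 mulr0.
set A := fun i => \sum_(0 <= j < k) delay d (j * b) i.
set v := delay d (k * b).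
have -> : \sum_(0 <= i < n) (\sum_(0 <= j < k.+1) delay d (j * b) i) ^+ 2
        = \sum_(0 <= i < n) A i ^+ 2 + \sum_(0 <= i < n) v i ^+ 2
          + 2 * \sum_(0 <= i < n) v i * A i.
  rewrite mulr_sumr -!big_split /=; apply: eq_bigr => i _.
  by rewrite big_nat_recr //= /A /v; ring.
have v_sqr : \sum_(0 <= i < n) v i ^+ 2 <= \sum_(0 <= i < n) d i ^+ 2.
  have d_sqr_ge0 p : 0 <= d p ^+ 2 by apply: sqr_ge0.
  apply: le_trans (sum_delay_le n (k * b) d_sqr_ge0).
  by apply: ler_sum_nat => i _; rewrite /v /delay; case: ifP; rewrite ?expr0n.
have b_pos : (0 : R) < b%:R by rewrite ltr0n.
have cross : 2 * \sum_(0 <= i < n) v i * A i <= (\sum_(0 <= p < n) d p) ^+ 2 / b%:R.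
  have cross_b : b%:R * \sum_(0 <= i < n) v i * A i
      <= \sum_(0 <= p < n) d p * \sum_(p.+1 <= q < n) d q.
    exact: delay_cross_le.
  rewrite ler_pdivlMr //; move: cross_b (sum_mul_suffix_le_sqr n d_ge0); lra.
have -> : k.+1%:R / b%:R = k%:R / b%:R + 1 / b%:R :> R by rewrite -addn1 natrD mulrDl.
rewrite -addn1 natrD mul1r.
move: IH v_sqr cross; lra.
Qed.

Definition extend0 (R : nmodType) (n : nat) (c : nat -> R) (m : nat) : R :=
  if (m < n)%N then c m else 0.

Section Extend0.
Variables (R : numDomainType) (n : nat) (c : nat -> R).
Hypotheses (c_step : forall i, (i.+1 < n)%N -> c i.+1 <= c i) (c_last : 0 <= c n.-1).

Lemma extend0_noninc x y : (x <= y)%N -> extend0 n c y <= extend0 n c x.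
Proof.
apply: Order.NatMonotonyTheory.nonincnP => m; rewrite /extend0.
case: (ltnP m.+1 n) => [lt_m1n | ge_m1n]; first by rewrite (ltnW lt_m1n) c_step.
by case: ltnP => // lt_mn; have -> : m = n.-1 by lia.
Qed.

Lemma extend0_ge0 p : 0 <= extend0 n c p.
Proof.
apply: le_trans (extend0_noninc (leq_addr n p)).
by rewrite /extend0 ifF //; lia.
Qed.

End Extend0.

Lemma eq_toeplitz_lt (R : pzRingType) (n : nat) (c c' : nat -> R) :
  (forall m, (m < n)%N -> c m = c' m) -> toeplitz_lt n c = toeplitz_lt n c'.
Proof.
move=> eq_cc'; apply/matrixP => i j; rewrite !mxE.
by case: ifP => // _; apply: eq_cc'; rewrite (leq_ltn_trans (leq_subr j i)).
Qed.

Lemma coln_toeplitz_lt (R : pzRingType) (n : nat) (c : nat -> R) (s : nat) (i : 'I_n) :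
  coln (toeplitz_lt n c) s i 0 = delay c s i.
Proof.
rewrite /coln /delay mxE; case: insubP => [j _ <- | ge_sn]; first by rewrite mxE.
by rewrite ifF //; apply: contraNF ge_sn => /leq_ltn_trans; apply.
Qed.

Lemma l2norm_sqr (R : rcfType) (n : nat) (v : 'cV[R]_n) :
  l2norm v ^+ 2 = \sum_(i < n) v i 0 ^+ 2.
Proof. by rewrite sqr_sqrtr // sumr_ge0 // => i _; apply: sqr_ge0. Qed.

Lemma sens_toeplitz_lt (R : rcfType) (n k b : nat) (c : nat -> R) :
  sens k b (toeplitz_lt n c) ^+ 2
    = \sum_(0 <= i < n) (\sum_(0 <= j < k) delay c (j * b) i) ^+ 2.
Proof.
rewrite /sens l2norm_sqr big_mkord; apply: eq_bigr => i _.
rewrite summxE big_mkord; congr (_ ^+ 2); apply: eq_bigr => j _.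
exact: coln_toeplitz_lt.
Qed.

Lemma sum_sqr_col_le_norm_1_2 (R : rcfType) (m n : nat) (M : 'M[R]_(m, n)) (j : 'I_n) :
  \sum_(i < m) M i j ^+ 2 <= norm_1_2 M ^+ 2.
Proof.
have col_le : l2norm (col j M) <= norm_1_2 M by apply: le_bigmax.
have col_ge0 : 0 <= l2norm (col j M) by apply: sqrtr_ge0.
rewrite (eq_bigr (fun i => col j M i 0 ^+ 2)) => [|i _]; last by rewrite mxE.
by rewrite -l2norm_sqr lerXn2r // nnegrE (le_trans col_ge0).
Qed.

Lemma sqr_sum_norm_col_le_norm_1_1 (R : rcfType) (m n : nat) (M : 'M[R]_(m, n)) (j : 'I_n) :
  (\sum_(i < m) `|M i j|) ^+ 2 <= norm_1_1 M ^+ 2.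
Proof.
have col_le : l1norm (col j M) <= norm_1_1 M by apply: le_bigmax.
have col_ge0 : 0 <= l1norm (col j M) by apply: sumr_ge0.
rewrite (eq_bigr (fun i => `|col j M i 0|)) => [|i _]; last by rewrite mxE.
by rewrite lerXn2r // nnegrE (le_trans col_ge0).
Qed.

Theorem mainTheorem2 (R : rcfType) (n : nat) (c : nat -> R) (k b : nat) :
  (0 < n)%N ->
  (forall i : nat, (i.+1 < n)%N -> c i.+1 <= c i) ->
  0 <= c n.-1 ->
  (1 <= k)%N -> (1 <= b)%N -> ((k - 1) * b <= n - 1)%N ->
  sens k b (toeplitz_lt n c) ^+ 2 <=
    k%:R * norm_1_2 (toeplitz_lt n c) ^+ 2
    + (k%:R / b%:R) * norm_1_1 (toeplitz_lt n c) ^+ 2.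
Proof.
case: n => [//|n] _ c_step c_last _ b_gt0 _.
set d := extend0 n.+1 c.
rewrite (@eq_toeplitz_lt _ _ c d); last by move=> m lt_mn; rewrite /d /extend0 lt_mn.
have d_ge0 := extend0_ge0 c_step c_last.
rewrite sens_toeplitz_lt.
apply: le_trans (sum_sqr_sum_delay_le n.+1 k b_gt0 d_ge0 (extend0_noninc c_step c_last)) _.
have col0E (i : 'I_n.+1) : toeplitz_lt n.+1 d i 0 = d i by rewrite mxE subn0.
have -> : \sum_(0 <= i < n.+1) d i ^+ 2 = \sum_(i < n.+1) toeplitz_lt n.+1 d i 0 ^+ 2.
  by rewrite big_mkord; apply: eq_bigr => i _; rewrite col0E.
have -> : \sum_(0 <= i < n.+1) d i = \sum_(i < n.+1) `|toeplitz_lt n.+1 d i 0|.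
  by rewrite big_mkord; apply: eq_bigr => i _; rewrite col0E ger0_norm.
rewrite lerD // ler_wpM2l ?divr_ge0 //.
  exact: sum_sqr_col_le_norm_1_2.
exact: sqr_sum_norm_col_le_norm_1_1.
Qed.
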